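(* Let $M$ be an odd prime, $p \in \mathbb{Z}_M^{\times}$, $q_1, q_2, q_3, q_4 \in \mathbb{Z}_M$, and let $K, C$ be positive integers with $\gcd(K, M) = 1$. Let $\varphi, \psi : \mathbb{Q} \to \mathbb{Z}$ satisfy $\varphi(x + C) = -\varphi(x)$ and $\psi(x + C) = -\psi(x)$ for all $x \in \frac{C}{K}\mathbb{Z}$. Identify each $x = \frac{j}{K}$ ($j \in \mathbb{Z}$) with $\bar{x} := jK^{-1} \in \mathbb{Z}_M$, and let $x \mapsto p^x$ be an assignment $\frac{1}{K}\mathbb{Z} \to \mathbb{Z}_M$ with $p^{x+a} = p^x p^a$ for all $x \in \frac1K\mathbb{Z}$ and integers $a \ge 0$. For $x \in \frac{1}{K}\mathbb{Z}$ with $\bar{x} \ne 0$ and $a, b \in \mathbb{Z}_M$ set \[ s_M(x; a, b) := \big(p^x + a\,\varphi(Cx) + b\,\psi(Cx)\big)\cdot \bar{x}^{-1} \in \mathbb{Z}_M . \] Let $t \in \frac{1}{K}\mathbb{Z}$ and nonnegative integers $u, v$ be such that $\bar t,\ \overline{t+2v+1},\ \overline{t+2u},\ \overline{t+2u+2v+1}$ are all nonzero in $\mathbb{Z}_M$, and put \[ s_0 = s_M(t; q_1,q_2),\ s_1 = s_M(t+2v+1; q_1,q_2),\ s_2 = s_M(t+2u; q_3,q_4),\ s_3 = s_M(t+2u+2v+1; q_3,q_4). \] Assume $2(s_1 p^{2u} - s_3) \not\equiv 0 \pmod M$. For $s^* \in \mathbb{Z}_M$ with $s_1 p^{2u} -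 s^* \ne 0$ define \[ v^*(s^* ) := \frac{ -s_0 p^{2u} \bar t - s_1 p^{2u}(\bar t+1) + s_2(\bar t+2u) + s^*(\bar t+2u+1) }{ 2(s_1 p^{2u} - s^* ) } \in \mathbb{Z}_M . \] Then $s_3$ is the only element $s^* \in \mathbb{Z}_M$ (with $s_1 p^{2u} - s^* \neq 0$) such that $v^*(s^* ) \equiv v \pmod M$.
   Context: All arithmetic is in $\mathbb{Z}_M$; $K^{-1}$ denotes the inverse of $K$ modulo $M$. The values $s_0,\dots,s_3$ are the evaluations used in the paper's symmetric invariant-based protocol (with $t$ a hidden evaluation index and $u,v$ session parameters), and $v^*(s^* )$ is the receiver's recovery formula for $v$ from a candidate third evaluation $s^*$. *)

From HB Require Import structures.
From mathcomp Require Import all_boot all_order all_algebra.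

Import Order.TTheory GRing.Theory Num.Theory.
Local Open Scope ring_scope.

(* Elements of (1/K)Z are represented by their numerator j : int (x = j/K).
   Z_M is 'F_M (M prime). *)

Definition ratK (K : nat) (j : int) : rat := j%:~R / K%:R.

Definition barK (M K : nat) (j : int) : 'F_M := j%:~R * (K%:R)^-1.

(* s_M(x; a, b) for x = j/K, with power assignment pw (pw j = p^(j/K)) *)
Definition sM (M K C : nat) (pw : int -> 'F_M) (phi psi : rat -> int)
  (j : int) (a b : 'F_M) : 'F_M :=
  (pw j + a * (phi (C%:R * ratK K j))%:~R + b * (psi (C%:R * ratK K j))%:~R)
    * (barK M K j)^-1.

From HB Require Import structures.
From mathcomp Require Import all_boot all_order all_algebra.
From mathcomp Require Import ring.
Import Order.TTheory GRing.Theory Num.Theory.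
Local Open Scope ring_scope.

(* Write P = p^t, A = phi(Ct), B = psi(Ct).  Shifting the evaluation point
   by an integer n multiplies P by p^n and A, B by (-1)^n, and adds n to the
   denominator.  So, with T the image of t in Z_M, after clearing denominators
     -p^(2u) s0 T - p^(2u) s1 (T+2v+1) + s2 (T+2u) + s3 (T+2u+2v+1) = 0,
   the P, A and B contributions cancelling.  Hence
   numerator(s) - 2v (s1 p^(2u) - s) = (s - s3) (T+2u+2v+1), which vanishes
   exactly at s = s3. *)

Lemma antiperiodic_shift (K C : nat) (f : rat -> int) : (0 < K)%N ->
  (forall j : int, f (C%:R * ratK K j + C%:R) = - f (C%:R * ratK K j)) ->
  forall (j : int) (n : nat),
  f (C%:R * ratK K (j + (n * K)%N%:Z)) = (-1) ^+ n * f (C%:R * ratK K j).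
Proof.
move=> K_gt0 f_anti j; elim=> [|n IHn]; first by rewrite mul0n addr0 mul1r.
have K_neq0 : (K%:R : rat) != 0 by rewrite pnatr_eq0 -lt0n.
have -> : C%:R * ratK K (j + (n.+1 * K)%N%:Z) =
          C%:R * ratK K (j + (n * K)%N%:Z) + C%:R by rewrite /ratK; field.
by rewrite f_anti IHn exprS mulN1r mulNr.
Qed.

Section Shift.

Context {M K C : nat} {p : 'F_M} {pw : int -> 'F_M} {phi psi : rat -> int}.
Hypothesis pM : prime M.
Hypothesis K_gt0 : (0 < K)%N.
Hypothesis cKM : coprime K M.
Hypothesis phi_anti :
  forall j : int, phi (C%:R * ratK K j + C%:R) = - phi (C%:R * ratK K j).
Hypothesis psi_anti :
  forall j : int, psi (C%:R * ratK K j + C%:R) = - psi (C%:R * ratK K j).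
Hypothesis pw_shift :
  forall (j : int) (a : nat), pw (j + (a * K)%N%:Z) = pw j * p ^+ a.

Lemma barK_shift (j : int) (n : nat) :
  barK M K (j + (n * K)%N%:Z) = barK M K j + n%:R.
Proof.
have K_neq0 : (K%:R : 'F_M) != 0.
  by rewrite -(dvdn_pcharf (pchar_Fp pM)) -prime_coprime // coprime_sym.
by rewrite /barK intrD mulrDl -pmulrn natrM mulfK.
Qed.

Lemma sM_mul_barK (j : int) (a b : 'F_M) : barK M K j != 0 ->
  sM M K C pw phi psi j a b * barK M K j =
  pw j + (a * (phi (C%:R * ratK K j))%:~R + b * (psi (C%:R * ratK K j))%:~R).
Proof. by move=> j_neq0; rewrite /sM divfK // addrA. Qed.

Lemma sM_shift_mul (t : int) (n : nat) (a b : 'F_M) :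
  barK M K (t + (n * K)%N%:Z) != 0 ->
  sM M K C pw phi psi (t + (n * K)%N%:Z) a b * (barK M K t + n%:R) =
  pw t * p ^+ n + (-1) ^+ n * (a * (phi (C%:R * ratK K t))%:~R
                             + b * (psi (C%:R * ratK K t))%:~R).
Proof.
move=> tn_neq0; rewrite -barK_shift sM_mul_barK // pw_shift.
rewrite !antiperiodic_shift // !intrM rmorphXn rmorphN1 /=.
by rewrite (mulrCA a) (mulrCA b) -mulrDr.
Qed.

End Shift.

Section Invariant.

Context {R : comRingType} {tb P A B pu pv q1 q2 q3 q4 s0 s1 s2 s3 : R}.
Context {u v : nat}.
Hypothesis e0 : s0 * tb = P + (q1 * A + q2 * B).
Hypothesis e1 : s1 * (tb + (2 * v + 1)%:R) = P * pv - (q1 * A + q2 * B).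
Hypothesis e2 : s2 * (tb + (2 * u)%:R) = P * pu + (q3 * A + q4 * B).
Hypothesis e3 :
  s3 * (tb + (2 * u + 2 * v + 1)%:R) = P * (pu * pv) - (q3 * A + q4 * B).

Lemma weighted_sum_eq0 :
  - pu * (s0 * tb) - pu * (s1 * (tb + (2 * v + 1)%:R))
  + s2 * (tb + (2 * u)%:R) + s3 * (tb + (2 * u + 2 * v + 1)%:R) = 0.
Proof. by rewrite e0 e1 e2 e3; ring. Qed.

Lemma numerator_sub_linear (s : R) :
  (- s0 * pu * tb - s1 * pu * (tb + 1)
   + s2 * (tb + (2 * u)%:R) + s * (tb + (2 * u)%:R + 1))
  - v%:R * (2 * (s1 * pu - s)) = (s - s3) * (tb + (2 * u + 2 * v + 1)%:R).
Proof. by rewrite -[RHS]addr0 -weighted_sum_eq0; ring. Qed.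

End Invariant.

Lemma divf_eq_unique (F : fieldType) (num den : F -> F) (w c s3 : F) :
  c != 0 -> (forall s, num s - w * den s = (s - s3) * c) -> den s3 != 0 ->
  num s3 / den s3 = w /\ (forall s, den s != 0 -> num s / den s = w -> s = s3).
Proof.
move=> c_neq0 num_lin den3_neq0; split.
  by move/eqP: (num_lin s3); rewrite subrr mul0r subr_eq0 => /eqP ->; rewrite mulfK.
move=> s den_neq0 Ns; move: (num_lin s); rewrite -Ns divfK // subrr => /esym/eqP.
by rewrite mulf_eq0 (negbTE c_neq0) orbF subr_eq0 => /eqP.
Qed.

Theorem lemma1 (M : nat) (p q1 q2 q3 q4 : 'F_M) (K C : nat)
  (phi psi : rat -> int) (pw : int -> 'F_M) (t : int) (u v : nat) :
  prime M -> odd M -> p != 0 ->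
  (0 < K)%N -> (0 < C)%N -> coprime K M ->
  (forall j : int, phi (C%:R * ratK K j + C%:R) = - phi (C%:R * ratK K j)) ->
  (forall j : int, psi (C%:R * ratK K j + C%:R) = - psi (C%:R * ratK K j)) ->
  (forall (j : int) (a : nat), pw (j + (a * K)%N%:Z) = pw j * p ^+ a) ->
  barK M K t != 0 ->
  barK M K (t + ((2 * v + 1) * K)%N%:Z) != 0 ->
  barK M K (t + ((2 * u) * K)%N%:Z) != 0 ->
  barK M K (t + ((2 * u + 2 * v + 1) * K)%N%:Z) != 0 ->
  let s0 := sM M K C pw phi psi t q1 q2 in
  let s1 := sM M K C pw phi psi (t + ((2 * v + 1) * K)%N%:Z) q1 q2 in
  let s2 := sM M K C pw phi psi (t + ((2 * u) * K)%N%:Z) q3 q4 in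
  let s3 := sM M K C pw phi psi (t + ((2 * u + 2 * v + 1) * K)%N%:Z) q3 q4 in
  let tb := barK M K t in
  let vstar := fun s : 'F_M =>
    (- s0 * p ^+ (2 * u) * tb - s1 * p ^+ (2 * u) * (tb + 1)
     + s2 * (tb + (2 * u)%:R) + s * (tb + (2 * u)%:R + 1))
    / (2 * (s1 * p ^+ (2 * u) - s)) in
  2 * (s1 * p ^+ (2 * u) - s3) != 0 ->
  (s1 * p ^+ (2 * u) - s3 != 0 /\ vstar s3 = v%:R) /\
  (forall s : 'F_M, s1 * p ^+ (2 * u) - s != 0 -> vstar s = v%:R -> s = s3).
Proof.
move=> pM _ _ K_gt0 _ cKM phi_anti psi_anti pw_shift t_neq0 t1_neq0 t2_neq0 t3_neq0
  s0 s1 s2 s3 tb vstar.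
rewrite mulf_eq0 negb_or => /andP[two_neq0 den3_neq0].
have shift := sM_shift_mul pM K_gt0 cKM phi_anti psi_anti pw_shift t.
have sign_odd n : (-1) ^+ n = (if odd n then -1 else 1) :> 'F_M.
  by rewrite -signr_odd; case: (odd n).
have e0 : s0 * tb = _ := sM_mul_barK t q1 q2 t_neq0.
have e1 := shift _ q1 q2 t1_neq0.
have e2 := shift _ q3 q4 t2_neq0.
have e3 := shift _ q3 q4 t3_neq0.
have pD : p ^+ (2 * u + 2 * v + 1) = p ^+ (2 * u) * p ^+ (2 * v + 1).
  by rewrite -exprD addnA.
rewrite sign_odd oddD oddM /= mulN1r in e1.
rewrite sign_odd oddM /= mul1r in e2.
rewrite sign_odd oddD oddD !oddM /= mulN1r pD in e3.
rewrite (barK_shift pM cKM) in t3_neq0.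
have [vstar_s3 vstar_inj] := @divf_eq_unique _
  (fun s => - s0 * p ^+ (2 * u) * tb - s1 * p ^+ (2 * u) * (tb + 1)
            + s2 * (tb + (2 * u)%:R) + s * (tb + (2 * u)%:R + 1))
  (fun s => 2 * (s1 * p ^+ (2 * u) - s)) _ _ _
  t3_neq0 (numerator_sub_linear e0 e1 e2 e3) (mulf_neq0 two_neq0 den3_neq0).
split=> // s den_neq0; exact: vstar_inj s (mulf_neq0 two_neq0 den_neq0).
Qed.
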